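(* There is an absolute constant $C$ such that for every finite graph $G$, \[\mathrm{rw}(G)\le 3\,\mathrm{fw}_\infty(G)+1\le C\cdot 2^{\mathrm{rw}(G)}+C.\] In particular, a class $\mathcal C$ of graphs has bounded rank-width if and only if $\sup_{G\in\mathcal C}\mathrm{fw}_\infty(G)<\infty$.
   Context: Graphs are finite, simple, undirected. For a bipartition $V(G)=A\uplus B$, the cut-rank $\mathrm{rk}_G(A,B)$ is the rank over the two-element field of the $A\times B$ $0/1$ matrix whose $(a,b)$ entry is $1$ iff $ab\in E(G)$. The rank-width $\mathrm{rw}(G)$ is the least $k$ such that there is a tree whose inner nodes have degree at most $3$ and whose leaves are the vertices of $G$ such that for every tree edge $e$, the bipartition of $V(G)$ into leaves on the two sides of $e$ has cut-rank at most $k$ (graphs with at most one vertex have rank-width $0$). Flipping sets $X,Y$ inverts adjacency of all pairs of distinct $x\in X,y\in Y$; a $k$-flip of $G$ is obtained by choosing a partition $\mathcal P$ of $V(G)$ with at most $k$ parts and flipping some pairs of (possibly equal) parts. Flipper game of radius $\infty$ and width $k$: $G_0=G$, runner chooses $v_0$; in round $i\ge1$ the flipper announces a $k$-flip $G_i$ of $G$, and the runner moves from $v_{i-1}$ to any vertex $v_i$ in the same connected component of $G_{i-1}$; the flipper wins if $v_i$ is isolated in $G_i$. $\mathrm{fw}_\infty(G)$ is the least $k$ for which the flipper has a winning strategy. *)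

From HB Require Import structures.
From mathcomp Require Import all_boot all_algebra.
Set Implicit Arguments. Unset Strict Implicit. Unset Printing Implicit Defensive.
Import GRing.Theory.

Record sgraph := SGraph {
  vert : finType;
  adj : rel vert;
  adj_sym : symmetric adj;
  adj_irr : irreflexive adj }.

Section Defs.
Variable G : sgraph.
Local Notation V := (vert G).
Local Notation E := (@adj G).

Definition cut_matrix (A : {set V}) : 'M['F_2]_(#|A|, #|~: A|) :=
  \matrix_(i, j) (if E (enum_val i) (enum_val j) then 1%R else 0%R).

Definition cut_rank (A : {set V}) : nat := \rank (cut_matrix A).

Definition del_edge (N : finType) (t : rel N) (u v : N) : rel N :=
  fun a b => t a b && ~~ (((a == u) && (b == v)) || ((a == v) && (b == u))).

Definition is_tree (N : finType) (t : rel N) : Prop :=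
  symmetric t /\ irreflexive t /\
  (forall a b, connect t a b) /\
  (forall u v, t u v -> ~~ connect (del_edge t u v) u v).

Definition tdeg (N : finType) (t : rel N) (a : N) : nat := #|[pred b | t a b]|.

Definition rank_decomp (k : nat) : Prop :=
  exists (N : finType) (t : rel N) (L : V -> N),
    [/\ is_tree t,
        forall a, tdeg t a <= 3,
        injective L,
        forall a, (tdeg t a <= 1) <-> (exists x, L x = a)
      & forall u v, t u v ->
          cut_rank [set x | connect (del_edge t u v) u (L x)] <= k].

(* rw(G) <= k  (graphs with at most one vertex have rank-width 0) *)
Definition rw_le (k : nat) : Prop := #|V| <= 1 \/ rank_decomp k.

Definition is_rw (r : nat) : Prop := rw_le r /\ forall k, rw_le k -> r <= k.

(* H is a k-flip of G: a partition of V into at most k (possibly empty) parts,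
   given by p : V -> 'I_k, and a symmetric relation F on the parts saying which
   (unordered, possibly equal) pairs of parts are flipped. *)
Definition is_kflip (k : nat) (H : rel V) : Prop :=
  exists (p : V -> 'I_k) (F : rel 'I_k),
    symmetric F /\
    forall x y, H x y = (x != y) && (E x y (+) F (p x) (p y)).

Definition isolated (H : rel V) (w : V) : Prop := forall w', ~~ H w w'.

(* fwin k H v : in a position where the previous graph is G_{i-1} = H and the
   runner stands on v_{i-1} = v, the flipper (of width k, radius infinity) can
   force a win.  This is the least fixed point (attractor) characterization of
   the flipper having a winning strategy: the flipper announces a k-flip H' of G,
   then for every vertex w in the component of v in H, either w is isolated in H'
   (the flipper wins now) or the flipper can force a win from (H', w). *)
Inductive fwin (k : nat) : rel V -> V -> Prop :=
| fwin_intro (H : rel V) (v : V) (H' : rel V) :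
    is_kflip k H' ->
    (forall w, connect H v w -> isolated H' w \/ fwin k H' w) ->
    fwin k H v.

Definition flipper_wins (k : nat) : Prop := forall v0 : V, fwin k E v0.

Definition is_fw (f : nat) : Prop :=
  flipper_wins f /\ forall k, flipper_wins k -> f <= k.

End Defs.

From mathcomp Require Import all_boot all_algebra.
From mathcomp Require Import zify.
From Stdlib Require Import Classical.
Set Implicit Arguments. Unset Strict Implicit. Unset Printing Implicit Defensive.
Import GRing.Theory.

(* Lower bound: if the flipper wins with [k]-flips, every set [W]
   of at least two vertices has a separator of cut-rank at most [k] leaving
   between a third and two thirds of [W] on each side.  Otherwise every
   [k]-flip has a component containing more than two thirds of [W]; two such
   components meet, and such a component has no isolated vertex, so the runner
   survives by always moving into it.  Splitting a set [Z] of cut-rank [3k+1]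
   along a separator of a basis of the cut (3k+1 vertices of [~: Z]) gives two
   parts of cut-rank at most [3k]; recursing yields a laminar family whose
   Hasse diagram is a rank decomposition of width [3k+1].
   Upper bound: along a rank decomposition of width [r], the flipper keeps the
   runner among the leaves of a subtree hanging off an edge [uv].  A flip with
   parts given by the branches at [u] (at most four, counting [u] itself) and,
   within each, the at most [2 ^ r] adjacency patterns towards the other
   branches deletes all edges between branches; the runner is then confined to
   a strictly smaller subtree or isolated.  Hence [fw <= 4 * 2 ^ r]. *)

(** * Cut-rank over GF(2) *)

Section CrossRank.
Variable G : sgraph.
Local Notation V := (vert G).
Local Notation E := (@adj G).
Local Notation n := #|V|.
Local Open Scope ring_scope.

Definition adj_mx (C R : {set V}) : 'M['F_2]_(#|C|, #|R|) :=
  \matrix_(i, j) (if E (enum_val i) (enum_val j) then 1 else 0).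

Definition cross_rank (R C : {set V}) : nat := \rank (adj_mx C R).

(* Columns range over all of [V] (zero outside [R]), so that the rows for
   different sets [C] live in one space. *)
Definition adj_row (R : {set V}) (y : V) : 'rV['F_2]_n :=
  \row_i (if (enum_val i \in R) && E (enum_val i) y then 1 else 0).

Definition adj_rows (R C : {set V}) : 'M['F_2]_(#|C|, n) :=
  \matrix_(j < #|C|) adj_row R (enum_val j).

Definition incl_mx (R : {set V}) : 'M['F_2]_(#|R|, n) :=
  \matrix_(i, l) (if enum_val i == enum_val l then 1 else 0).

Definition restr_mx (R : {set V}) : 'M['F_2]_n :=
  diag_mx (\row_i (if enum_val i \in R then 1 else 0)).

Lemma incl_mx_free (R : {set V}) : row_free (incl_mx R).
Proof.
have incl_tr : incl_mx R *m (incl_mx R)^T = 1%:M.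
  apply/matrixP => i j; rewrite !mxE (bigD1 (enum_rank (enum_val i))) //= big1.
    rewrite !mxE enum_rankK eqxx mul1r addr0 (inj_eq enum_val_inj) eq_sym.
    by case: (i == j).
  move=> l /negPf nl; rewrite !mxE; case: eqP => [il |]; last by rewrite mul0r.
  by rewrite il enum_valK eqxx in nl.
rewrite /row_free eqn_leq rank_leq_row /=.
by rewrite -[X in (X <= _)%N](mxrank1 'F_2 #|R|) -incl_tr mxrankM_maxl.
Qed.

Lemma adj_rowsE (R C : {set V}) : adj_rows R C = adj_mx C R *m incl_mx R.
Proof.
apply/matrixP => j l; rewrite !mxE.
case: (boolP (enum_val l \in R)) => Rl /=; last first.
  rewrite big1 // => i _; rewrite !mxE; case: eqP => [il |]; last by rewrite mulr0.
  by move: Rl; rewrite -il enum_valP.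
rewrite (bigD1 (enum_rank_in Rl (enum_val l))) //= big1.
  by rewrite !mxE enum_rankK_in // eqxx mulr1 addr0 adj_sym; case: (E _ _).
move=> i ni; rewrite !mxE; case: eqP => [il |]; last by rewrite mulr0.
by move: ni; rewrite -{1}(enum_valK_in Rl i) il eqxx.
Qed.

Lemma cross_rank_rows (R C : {set V}) : cross_rank R C = \rank (adj_rows R C).
Proof. by rewrite adj_rowsE mxrankMfree ?incl_mx_free. Qed.

Lemma cross_rankC (R C : {set V}) : cross_rank R C = cross_rank C R.
Proof.
rewrite /cross_rank -mxrank_tr; congr (\rank _).
by apply/matrixP => i j; rewrite !mxE adj_sym.
Qed.

Lemma cross_rank_leq_card (R C : {set V}) : (cross_rank R C <= #|C|)%N.
Proof. exact: rank_leq_row. Qed.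

Lemma cut_rankE (A : {set V}) : cut_rank A = cross_rank A (~: A).
Proof. by rewrite cross_rankC. Qed.

Lemma cut_rankC (A : {set V}) : cut_rank (~: A) = cut_rank A.
Proof. by rewrite !cut_rankE setCK cross_rankC. Qed.

Lemma cut_rank_leq_card (A : {set V}) : (cut_rank A <= #|A|)%N.
Proof. by rewrite cut_rankE cross_rankC cross_rank_leq_card. Qed.

Lemma cut_rank0 : cut_rank (set0 : {set V}) = 0%N.
Proof. by apply/eqP; rewrite -leqn0 -(cards0 V) cut_rank_leq_card. Qed.

Lemma cut_rankT : cut_rank [set: V] = 0%N.
Proof. by rewrite -setC0 cut_rankC cut_rank0. Qed.

Lemma adj_row_sub (R C : {set V}) y : y \in C -> (adj_row R y <= adj_rows R C)%MS.
Proof.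
move=> Cy; have -> : adj_row R y = row (enum_rank_in Cy y) (adj_rows R C).
  by rewrite rowK enum_rankK_in.
exact: row_sub.
Qed.

Lemma adj_rows_subP (R C : {set V}) m (M : 'M['F_2]_(m, n)) :
  (forall y, y \in C -> (adj_row R y <= M)%MS) -> (adj_rows R C <= M)%MS.
Proof. by move=> sCM; apply/row_subP => j; rewrite rowK sCM ?enum_valP. Qed.

Lemma adj_rowsS (R C C' : {set V}) : C \subset C' -> (adj_rows R C <= adj_rows R C')%MS.
Proof. by move=> sCC'; apply: adj_rows_subP => y /(subsetP sCC'); apply: adj_row_sub. Qed.

Lemma adj_rowsU (R C1 C2 : {set V}) :
  (adj_rows R (C1 :|: C2) <= adj_rows R C1 + adj_rows R C2)%MS.
Proof.
apply: adj_rows_subP => y /setUP [] /(adj_row_sub R) sy; apply: submx_trans sy _.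
  exact: addsmxSl.
exact: addsmxSr.
Qed.

Lemma adj_rows_restr (R Z C : {set V}) :
  R \subset Z -> adj_rows R C = adj_rows Z C *m restr_mx R.
Proof.
move=> sRZ; apply/matrixP => j l; rewrite mul_mx_diag !mxE.
case: (boolP (enum_val l \in R)) => [/(subsetP sRZ) -> | _] /=.
  by rewrite mulr1.
by rewrite mulr0.
Qed.

Lemma adj_rows_restr_sub (R Z C C' : {set V}) : R \subset Z ->
  (adj_rows Z C <= adj_rows Z C')%MS -> (adj_rows R C <= adj_rows R C')%MS.
Proof. by move=> sRZ sCC'; rewrite !(adj_rows_restr _ sRZ) submxMr. Qed.

Lemma cross_rankS (R R' C C' : {set V}) :
  R \subset R' -> C \subset C' -> (cross_rank R C <= cross_rank R' C')%N.
Proof.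
move=> sRR' sCC'; rewrite !cross_rank_rows (adj_rows_restr _ sRR').
exact: leq_trans (mxrankM_maxl _ _) (mxrankS (adj_rowsS _ sCC')).
Qed.

Lemma cross_rankU (R C1 C2 : {set V}) :
  (cross_rank R (C1 :|: C2) <= cross_rank R C1 + cross_rank R C2)%N.
Proof.
rewrite !cross_rank_rows.
exact: leq_trans (mxrankS (adj_rowsU _ _ _)) (mxrank_adds_leqif _ _).1.
Qed.

Lemma kflip_closed_cut_rank k (H : rel V) (X : {set V}) : is_kflip k H ->
  (forall x y, H x y -> x \in X -> y \in X) -> (cut_rank X <= k)%N.
Proof.
case=> p [F [_ HE]] closedX.
pose P : 'M['F_2]_(#|X|, k) := \matrix_(i, l) (if p (enum_val i) == l then 1 else 0).
pose Q : 'M['F_2]_(k, #|~: X|) := \matrix_(l, j) (if F l (p (enum_val j)) then 1 else 0).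
rewrite /cut_rank; suff -> : cut_matrix X = P *m Q.
  exact: leq_trans (mxrankM_maxr _ _) (rank_leq_row _).
apply/matrixP => i j; rewrite !mxE (bigD1 (p (enum_val i))) //= big1 => [|l].
  rewrite !mxE eqxx mul1r addr0.
  have Xx := enum_valP i; have := enum_valP j; rewrite in_setC => Xy.
  have : ~~ H (enum_val i) (enum_val j) by apply: contra Xy => /closedX; apply.
  rewrite HE negb_and negbK; case: eqP => [Exy | _ /=]; first by move: Xy; rewrite -Exy Xx.
  by case: (E _ _); case: (F _ _).
by rewrite !mxE eq_sym => /negPf ->; rewrite mul0r.
Qed.

Lemma cut_rank_setI (Z X W : {set V}) :
  (adj_rows Z (~: Z) <= adj_rows Z W)%MS ->
  (cut_rank (Z :&: X) <= #|W :&: X| + cut_rank X)%N.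
Proof.
move=> spanW; set R := Z :&: X.
have sWR : (adj_rows R W <= adj_rows R (W :&: X) + adj_rows R (~: X))%MS.
  apply: submx_trans (adj_rowsU _ _ _); apply: adj_rowsS.
  by apply/subsetP => w Ww; rewrite !inE Ww; case: (w \in X).
have sCR : (adj_rows R (~: R) <= adj_rows R (W :&: X) + adj_rows R (~: X))%MS.
  apply: adj_rows_subP => y; rewrite !inE negb_and => /orP [Zy|Xy].
    apply: submx_trans sWR; apply: submx_trans (adj_row_sub R (_ : y \in ~: Z)) _.
      by rewrite inE.
    exact: adj_rows_restr_sub (subsetIl _ _) spanW.
  by apply: submx_trans (adj_row_sub _ _) (addsmxSr _ _); rewrite inE.
rewrite cut_rankE cross_rank_rows; apply: leq_trans (mxrankS sCR) _.
apply: leq_trans (mxrank_adds_leqif _ _).1 _.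
rewrite -!cross_rank_rows leq_add ?cross_rank_leq_card // cut_rankE.
exact: cross_rankS (subsetIr _ _) (subxx _).
Qed.

Lemma spanning_subset (Z C : {set V}) : exists W : {set V},
  [/\ W \subset C, #|W| = cross_rank Z C & (adj_rows Z C <= adj_rows Z W)%MS].
Proof.
set A := adj_rows Z C; set f := maxrankfun A.
exists [set enum_val (f i) | i : 'I_(\rank A)]; split.
- by apply/subsetP => y /imsetP [i _ ->]; exact: enum_valP.
- rewrite card_imset ?card_ord ?cross_rank_rows //.
  by move=> i j /enum_val_inj /maxrankfun_inj.
- apply: submx_trans (_ : (A <= rowsub f A)%MS) _; first by rewrite eq_maxrowsub.
  apply/row_subP => i; rewrite row_rowsub /A rowK.
  by apply: adj_row_sub; apply/imsetP; exists i.
Qed.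

Lemma adj_row_eq (R : {set V}) x x' y :
  adj_row R x = adj_row R x' -> y \in R -> E x y = E x' y.
Proof.
move/(congr1 (fun v : 'rV_n => v ord0 (enum_rank y))); rewrite !mxE enum_rankK => + Ry.
rewrite Ry /= !(adj_sym y).
by case: (E x y); case: (E x' y) => // /eqP; rewrite ?oner_eq0 // eq_sym oner_eq0.
Qed.

Lemma card_adj_rows (R C : {set V}) :
  (#|[set adj_row R y | y in C]| <= 2 ^ cross_rank R C)%N.
Proof.
set M := adj_rows R C.
apply: leq_trans (_ : #|[set D *m row_base M | D : 'rV['F_2]_(\rank M)]| <= _)%N.
  apply: subset_leq_card; apply/subsetP => v /imsetP [y Cy ->].
  have : (adj_row R y <= row_base M)%MS by rewrite eq_row_base adj_row_sub.
  by case/submxP => D ->; apply/imsetP; exists D.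
apply: leq_trans (leq_imset_card _ _) _.
by rewrite card_mx card_Fp // mul1n cross_rank_rows.
Qed.

End CrossRank.

(** * Balanced separators from a winning flipper *)

Section BalancedSeparator.
Variable G : sgraph.
Local Notation V := (vert G).
Local Notation E := (@adj G).

Definition balanced (W X : {set V}) := #|W| <= 3 * #|X :&: W| <= 2 * #|W|.

Definition heavy (W X : {set V}) := 2 * #|W| < 3 * #|X :&: W|.

Definition component (H : rel V) (c : V) := [set w | connect H c w].

Lemma kflip_sym k (H : rel V) : is_kflip k H -> symmetric H.
Proof. by case=> p [F [symF HE]] x y; rewrite !HE eq_sym adj_sym symF. Qed.

Lemma kflip_adj k : 0 < k -> is_kflip k E.
Proof.
move=> k_gt0; exists (fun=> Ordinal k_gt0), (fun _ _ => false); split=> // x y.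
by rewrite addbF; case: eqP => [->|//]; rewrite adj_irr.
Qed.

Lemma component_closed (H : rel V) c x y :
  H x y -> x \in component H c -> y \in component H c.
Proof. by rewrite !inE => xy /connect_trans; apply; apply: connect1. Qed.

Lemma light_components_balanced (H : rel V) (W : {set V}) :
  (forall c, 3 * #|component H c :&: W| < #|W|) ->
  exists2 X : {set V}, (forall x y, H x y -> x \in X -> y \in X) & balanced W X.
Proof.
move=> light.
pose ok (X : {set V}) := [forall x, forall y, H x y ==> (x \in X) ==> (y \in X)] &&
  (3 * #|X :&: W| <= 2 * #|W|).
have okP (X : {set V}) : reflect
    ((forall x y, H x y -> x \in X -> y \in X) /\ 3 * #|X :&: W| <= 2 * #|W|) (ok X).
  apply: (iffP andP) => [[/forallP clX ->] | [clX ->]]; last first.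
    by split=> //; apply/forallP => x; apply/forallP => y; apply/implyP => /clX/implyP.
  by split=> // x y xy; move: (clX x) => /forallP/(_ y)/implyP/(_ xy)/implyP.
have ok0 : ok set0 by apply/okP; rewrite set0I cards0; split=> // x y _; rewrite inE.
case: (arg_maxnP (fun X => #|X :&: W|) ok0) => X /okP [clX smallX] maxX.
exists X => //; rewrite /balanced smallX andbT leqNgt; apply/negP => lightX.
have [w Ww Xw] : exists2 w, w \in W & w \notin X.
  case: (boolP (W \subset X)) => [sWX | /subsetPn [w]]; last by exists w.
  by move: lightX; rewrite (setIidPr sWX); lia.
have /maxX : ok (X :|: component H w).
  apply/okP; split.
    move=> x y xy /setUP [/(clX _ _ xy) Xy | /(component_closed xy) Cy].
      by rewrite inE Xy.
    by rewrite inE Cy orbT.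
  have := light w; rewrite setIUl.
  have : #|(X :&: W) :|: (component H w :&: W)| <= #|X :&: W| + #|component H w :&: W|.
    exact: leq_card_setU.
  lia.
apply/negP; rewrite -ltnNge; apply: proper_card; rewrite properE setSI ?subsetUl //=.
by apply/subsetPn; exists w; rewrite !inE ?Ww ?connect0 ?orbT // (negPf Xw).
Qed.

Lemma kflip_heavy_component k (H : rel V) (W : {set V}) : is_kflip k H ->
  (forall X, cut_rank X <= k -> ~~ balanced W X) -> exists c, heavy W (component H c).
Proof.
move=> flipH no_sep; apply/existsP; apply: contraT => /existsPn not_heavy.
have [c | X clX] := @light_components_balanced H W.
  rewrite ltnNge; apply/negP => ge_c.
  have /no_sep : cut_rank (component H c) <= k.
    exact: kflip_closed_cut_rank flipH (@component_closed H c).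
  by rewrite /balanced ge_c leqNgt not_heavy.
by move=> balX; have := no_sep _ (kflip_closed_cut_rank flipH clX); rewrite balX.
Qed.

Lemma heavy_meet (W X Y : {set V}) : heavy W X -> heavy W Y -> exists w, w \in X :&: Y.
Proof.
rewrite /heavy => hX hY; apply/set0Pn/eqP => XY0.
have := cardsUI (X :&: W) (Y :&: W); rewrite setIACA setIid XY0 set0I cards0 addn0.
have : #|(X :&: W) :|: (Y :&: W)| <= #|W| by rewrite -setIUl subset_leq_card ?subsetIr.
lia.
Qed.

Lemma component_not_isolated (H : rel V) c w : symmetric H ->
  1 < #|component H c| -> connect H c w -> ~ isolated H w.
Proof.
move=> symH big_c cw isol_w.
have [u] : exists u, u \in component H c :\ w.
  by apply/set0Pn; rewrite -card_gt0; have := cardsD1 w (component H c); case: (_ \in _); lia.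
rewrite !inE => /andP [uw cu].
have : connect H w u by rewrite (sym_connect_sym symH) in cw; exact: connect_trans cw cu.
case/connectP => [[|w' p]] /= => [_ uw' | /andP [ww' _] _]; first by rewrite uw' eqxx in uw.
by have := isol_w w'; rewrite ww'.
Qed.

Section Runner.
Variables (k : nat) (W : {set V}).
Hypothesis W_gt1 : 1 < #|W|.
Hypothesis no_sep : forall X, cut_rank X <= k -> ~~ balanced W X.

(* The runner always stays in the unique heavy component of the current flip. *)
Lemma runner_escapes : forall H v, fwin k H v -> heavy W (component H v) -> False.
Proof.
fix IH 3 => H v winH heavy_v.
case: winH heavy_v => {}H {}v H' flipH' win' heavy_v.
have [c' heavy_c'] := kflip_heavy_component flipH' no_sep.
have [w] := heavy_meet heavy_v heavy_c'; rewrite !inE => /andP [vw c'w].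
have symH' := kflip_sym flipH'.
have heavy_w : heavy W (component H' w).
  suff -> : component H' w = component H' c' by [].
  by apply/setP => z; rewrite !inE (same_connect (sym_connect_sym symH') c'w).
case: (win' w vw) => [isol_w | win_w]; last exact: IH H' w win_w heavy_w.
apply: component_not_isolated symH' _ (connect0 _ w) isol_w.
by move: heavy_w; rewrite /heavy; have := subset_leq_card (subsetIl (component H' w) W); lia.
Qed.

End Runner.

Lemma flipper_wins_balanced_separator k : flipper_wins G k -> 0 < k ->
  forall W : {set V}, 1 < #|W| -> exists2 X, cut_rank X <= k & balanced W X.
Proof.
move=> win k_gt0 W W_gt1.
have [/existsP [X /andP [crX balX]] | /existsPn no_sep] :=
  boolP [exists X, (cut_rank X <= k) && balanced W X]; first by exists X.
have {}no_sep X : cut_rank X <= k -> ~~ balanced W X by move: (no_sep X) => /nandP [/negP|].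
exfalso; have [c heavy_c] := kflip_heavy_component (kflip_adj k_gt0) no_sep.
exact: (runner_escapes W_gt1 no_sep (win c) heavy_c).
Qed.

End BalancedSeparator.

(** * Laminar hierarchies and rank decompositions *)

Section Hierarchy.
Variable G : sgraph.
Local Notation V := (vert G).

Lemma cut_rankD1 (Z : {set V}) v : cut_rank (Z :\ v) <= cut_rank Z + 1.
Proof.
rewrite !cut_rankE; have -> : ~: (Z :\ v) = ~: Z :|: [set v].
  by apply/setP => x; rewrite !inE negb_and negbK orbC.
apply: leq_trans (cross_rankU _ _ _) _.
rewrite leq_add ?cross_rankS ?subD1set //.
by rewrite -(cards1 v) cross_rank_leq_card.
Qed.

Lemma cut_rank_set1 (x : V) : cut_rank [set x] <= 1.
Proof. by rewrite -(cards1 x) cut_rank_leq_card. Qed.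

Record hierarchy (Z : {set V}) (K : nat) (Fam : {set {set V}}) : Prop := Hierarchy {
  hier_top : Z \in Fam;
  hier_sub : forall A, A \in Fam -> A \subset Z;
  hier_set0 : set0 \notin Fam;
  hier_laminar : forall A B, A \in Fam -> B \in Fam ->
    [|| A \subset B, B \subset A | [disjoint A & B]];
  hier_set1 : forall x, x \in Z -> [set x] \in Fam;
  hier_split : forall A, A \in Fam -> 1 < #|A| ->
    exists2 B, B \in Fam & (B \proper A) && (A :\: B \in Fam);
  hier_cut_rank : forall A, A \in Fam -> cut_rank A <= K }.

Lemma hierarchy_set1 x K : cut_rank [set x] <= K -> hierarchy [set x] K [set [set x]].
Proof.
move=> crx; split.
- exact: set11.
- by move=> A /set1P ->.
- by rewrite inE eq_sym; apply/set0Pn; exists x; rewrite inE.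
- by move=> A B /set1P -> /set1P ->; rewrite subxx.
- by move=> y /set1P ->; rewrite set11.
- by move=> A /set1P ->; rewrite cards1.
- by move=> A /set1P ->.
Qed.

Lemma hierarchyU (Z Z1 : {set V}) K F1 F2 : Z1 \proper Z -> cut_rank Z <= K ->
  hierarchy Z1 K F1 -> hierarchy (Z :\: Z1) K F2 -> hierarchy Z K (Z |: (F1 :|: F2)).
Proof.
move=> ltZ1 crZ h1 h2; set Fam := Z |: (F1 :|: F2).
have sZ1 := proper_sub ltZ1.
have subZ A : A \in Fam -> A \subset Z.
  case/setU1P => [-> // | /setUP [/(hier_sub h1) | /(hier_sub h2)] sA].
    exact: subset_trans sA sZ1.
  exact: subset_trans sA (subsetDl _ _).
have disj A B : A \in F1 -> B \in F2 -> [disjoint A & B].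
  move=> /(hier_sub h1) sA /(hier_sub h2) sB; apply: disjointWl sA _.
  by apply: disjointWr sB _; rewrite disjoints_subset setDE setCI setCK subsetUr.
split => //.
- exact: setU11.
- rewrite !inE (negPf (hier_set0 h1)) (negPf (hier_set0 h2)) !orbF.
  by apply: contraTneq ltZ1 => <-; rewrite properE sub0set andbF.
- move=> A B FA FB; case: (eqVneq A Z) => [-> | nAZ]; first by rewrite subZ ?orbT.
  case: (eqVneq B Z) => [-> | nBZ]; first by rewrite subZ.
  move: FA FB; rewrite !inE (negPf nAZ) (negPf nBZ) /= => /orP [A1 | A2] /orP [B1 | B2].
  + exact: (hier_laminar h1 A1 B1).
  + by rewrite disj ?orbT.
  + by rewrite disjoint_sym disj ?orbT.
  + exact: (hier_laminar h2 A2 B2).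
- move=> x Zx; rewrite !inE; case: (boolP (x \in Z1)) => [/(hier_set1 h1) -> | Z1x].
    by rewrite orbT.
  by rewrite (hier_set1 h2) ?orbT // inE Z1x.
- move=> A /setU1P [-> _ | /setUP [A1 | A2] /[dup] ltA].
    by exists Z1; rewrite ?ltZ1 !inE ?(hier_top h1) ?(hier_top h2) ?orbT.
  + case/(hier_split h1): A1 => // B FB /andP [ltB FAB].
    by exists B; rewrite ?ltB !inE ?FB ?FAB ?orbT.
  + case/(hier_split h2): A2 => // B FB /andP [ltB FAB].
    by exists B; rewrite ?ltB !inE ?FB ?FAB ?orbT.
- by move=> A /setU1P [-> // | /setUP [/(hier_cut_rank h1) | /(hier_cut_rank h2)]].
Qed.

Section FromSeparators.
Variable k : nat.
Hypothesis k_gt0 : 0 < k.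
Hypothesis separator : forall W : {set V}, 1 < #|W| ->
  exists2 X, cut_rank X <= k & balanced W X.

(* Choose [W] of size [3k + 1] spanning the rows of [~: Z] on [Z]; a balanced
   separator of [W] leaves at most [2k] vectors of [W] on each side. *)
Lemma balanced_cut (Z : {set V}) : cut_rank Z = 3 * k + 1 ->
  exists X, cut_rank (Z :&: X) <= 3 * k /\ cut_rank (Z :\: X) <= 3 * k.
Proof.
move=> crZ; have [W [_ cardW spanW]] := spanning_subset Z (~: Z).
rewrite -cut_rankE crZ in cardW.
have [X crX /andP [lo hi]] : exists2 X, cut_rank X <= k & balanced W X.
  by apply: separator; rewrite cardW; lia.
have := cut_rank_setI X spanW; have := cut_rank_setI (~: X) spanW.
have := cardsID X W; rewrite cut_rankC -!setDE (setIC W X).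
by exists X; split; lia.
Qed.

Lemma hierarchy_split (Z : {set V}) : 1 < #|Z| -> cut_rank Z <= 3 * k + 1 ->
  exists2 Z1, Z1 != set0 &
    [&& Z1 \proper Z, cut_rank Z1 <= 3 * k + 1 & cut_rank (Z :\: Z1) <= 3 * k + 1].
Proof.
move=> Z_gt1 crZ.
have [lt_crZ | eq_crZ] : cut_rank Z < 3 * k + 1 \/ cut_rank Z = 3 * k + 1 by lia.
  have [v Zv] : exists v, v \in Z by apply/set0Pn; rewrite -card_gt0; lia.
  exists [set v]; first by apply/set0Pn; exists v; rewrite inE.
  have := cut_rank_set1 v; have := cut_rankD1 Z v.
  rewrite properE sub1set Zv /= => crD1 cr1; apply/and3P; split; try lia.
  by apply: contraTN Z_gt1 => /subset_leq_card; rewrite cards1 -leqNgt.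
have [X [crZX crZnX]] := balanced_cut eq_crZ.
have ZnX : Z :\: (Z :&: X) = Z :\: X.
  by apply/setP => x; rewrite !inE; case: (x \in Z); case: (x \in X).
exists (Z :&: X).
  apply: contraTneq crZnX => ZX0.
  by rewrite -ZnX ZX0 setD0 eq_crZ; lia.
rewrite properE subsetIl ZnX /=; apply/and3P; split; try lia.
apply: contraTN crZX => sZ; have -> : Z :&: X = Z by apply/eqP; rewrite eqEsubset subsetIl.
by rewrite eq_crZ; lia.
Qed.

Lemma hierarchy_exists (Z : {set V}) : Z != set0 -> cut_rank Z <= 3 * k + 1 ->
  exists Fam, hierarchy Z (3 * k + 1) Fam.
Proof.
have [n] := ubnP #|Z|; elim: n Z => // n IH Z ltZn nZ0 crZ.
have [Z_gt1 | Z_le1] := ltnP 1 #|Z|; last first.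
  have /cards1P [x ->] : #|Z| == 1 by rewrite eqn_leq Z_le1 card_gt0.
  by exists [set [set x]]; apply/hierarchy_set1/(leq_trans (cut_rank_set1 x)); lia.
have [Z1 nZ10 /and3P [ltZ1 crZ1 crZ2]] := hierarchy_split Z_gt1 crZ.
have sZ1 := proper_sub ltZ1.
have card_Z1 : 0 < #|Z1| < #|Z| by rewrite card_gt0 nZ10 proper_card.
have [F1 h1] : exists F1, hierarchy Z1 (3 * k + 1) F1 by apply: IH => //; lia.
have [F2 h2] : exists F2, hierarchy (Z :\: Z1) (3 * k + 1) F2.
  apply: IH => //; first by rewrite cardsDS //; lia.
  by rewrite setD_eq0; apply: contraTN ltZ1 => sZZ1; rewrite properE sZZ1 andbF.
by exists (Z |: (F1 :|: F2)); apply: (hierarchyU ltZ1 crZ h1 h2).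
Qed.

End FromSeparators.
End Hierarchy.

Lemma del_edgeC (N : finType) (t : rel N) u v : del_edge t u v =2 del_edge t v u.
Proof. by move=> a b; rewrite /del_edge orbC. Qed.

Lemma del_edge_sym (N : finType) (t : rel N) u v :
  symmetric t -> symmetric (del_edge t u v).
Proof.
move=> symt a b; rewrite /del_edge symt; congr (_ && ~~ _).
by rewrite orbC; congr (_ || _); rewrite andbC.
Qed.

Section HasseTree.
Variable G : sgraph.
Local Notation V := (vert G).
Variables (K : nat) (Fam : {set {set V}}).
Hypothesis hierF : hierarchy [set: V] K Fam.

Definition node := {A : {set V} | A \in Fam}.

Definition parent (a b : node) := (val a \proper val b) &&
  [forall c : node, ~~ ((val a \proper val c) && (val c \proper val b))].

Definition hasse (a b : node) := parent a b || parent b a.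

Definition root : node := exist _ [set: V] (hier_top hierF).

Definition leaf (x : V) : node := exist _ [set x] (hier_set1 hierF (in_setT x)).

Lemma node_nonempty (a : node) : exists x, x \in val a.
Proof. by apply/set0Pn; apply: contraNneq (hier_set0 hierF) => <-; apply: valP. Qed.

Lemma node_nested (a b : node) x : x \in val a -> x \in val b ->
  (val a \subset val b) || (val b \subset val a).
Proof.
move=> xa xb; case/or3P: (hier_laminar hierF (valP a) (valP b)) => [-> | -> | ] //.
  by rewrite orbT.
by move/disjointFr/(_ xa); rewrite xb.
Qed.

Lemma parent_proper (a b : node) : parent a b -> val a \proper val b.
Proof. by case/andP. Qed.

Lemma parent_not_sub (a b : node) : parent a b -> ~~ (val b \subset val a).
Proof. by move/parent_proper; rewrite properE => /andP []. Qed.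

Lemma parent_min (a p b : node) : parent a p -> val a \proper val b -> val p \subset val b.
Proof.
case/andP => ltap /forallP between ltab; have [x xa] := node_nonempty a.
have /node_nested : x \in val p by apply: subsetP (proper_sub ltap) _ xa.
move=> /(_ b (subsetP (proper_sub ltab) _ xa)) /orP [// | sbp].
case: (eqVneq (val b) (val p)) => [<- // | nbp].
by have := between b; rewrite ltab properEneq nbp sbp.
Qed.

Lemma parent_uniq (a p q : node) : parent a p -> parent a q -> p = q.
Proof.
move=> ap aq; apply/val_inj/eqP; rewrite eqEsubset.
by rewrite (parent_min ap (parent_proper aq)) (parent_min aq (parent_proper ap)).
Qed.

Lemma parent_exists (a : node) : val a != [set: V] -> exists p, parent a p.
Proof.
rewrite -properT => ltaT.
have [p ltap minp] :=
  @arg_minnP node root (fun b => val a \proper val b) (fun b => #|val b|) ltaT.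
exists p; apply/andP; split=> //; apply/forallP => c; apply/negP => /andP [ltac ltcp].
by move: (minp c ltac) (proper_card ltcp) => /= le lt; lia.
Qed.

Lemma below_part (a b c d : node) : val b :|: val c = val a ->
  [disjoint val b & val c] -> val d \proper val a ->
  (val d \subset val b) || (val d \subset val c).
Proof.
move=> + + ltda; wlog [x xd xb] : b c / exists2 x, x \in val d & x \in val b.
  move=> wlog_b bc_a disj; have [x xd] := node_nonempty d.
  have : x \in val a by apply: subsetP (proper_sub ltda) _ xd.
  rewrite -bc_a => /setUP [xb | xc]; first by apply: wlog_b => //; exists x.
  by rewrite orbC; apply: wlog_b; rewrite 1?setUC 1?disjoint_sym //; exists x.
move=> bc_a disj; apply/orP; left; apply/subsetP => y yd; apply: contraT => yb.
have yc : y \in val c.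
  by move: (subsetP (proper_sub ltda) _ yd); rewrite -bc_a => /setUP [/(negP yb) [] | //].
case/orP: (node_nested yd yc) => [/subsetP/(_ x xd) xc | scd].
  by rewrite (disjointFr disj xb) in xc.
case/orP: (node_nested xd xb) => [/subsetP/(_ y yd) yb' | sbd]; first by rewrite yb' in yb.
by move: ltda; rewrite properE -bc_a subUset sbd scd andbF.
Qed.

Lemma parent_part (a b c : node) : val b :|: val c = val a ->
  [disjoint val b & val c] -> parent b a.
Proof.
move=> bc_a disj; have [y yc] := node_nonempty c.
apply/andP; split.
  rewrite properE -bc_a subsetUl /=; apply/subsetPn; exists y; first by rewrite inE yc orbT.
  by rewrite (disjointFl disj yc).
apply/forallP => e; apply/negP => /andP [ltbe ltea].
case/orP: (below_part bc_a disj ltea) => [seb | sec]; first by rewrite properE seb andbF in ltbe.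
have [x xb] := node_nonempty b.
by move: (subsetP sec _ (subsetP (proper_sub ltbe) _ xb)); rewrite (disjointFr disj xb).
Qed.

Lemma parent_partE (a b c d : node) : val b :|: val c = val a ->
  [disjoint val b & val c] -> parent d a = (d == b) || (d == c).
Proof.
move=> bc_a disj; have ba := parent_part bc_a disj.
have ca : parent c a by apply: (parent_part (c := b)); rewrite 1?setUC 1?disjoint_sym.
apply/idP/idP => [da | /orP [] /eqP -> //].
have eq_below (e : node) : parent e a -> val d \subset val e -> d == e.
  move=> ea sde; rewrite -val_eqE eqEsubset sde /=; apply: contraT => nsed.
  have /(parent_min da) sae : val d \proper val e by rewrite properE sde.
  by have := parent_proper ea; rewrite properE sae andbF.
case/orP: (below_part bc_a disj (parent_proper da)).
  by move/(eq_below b ba) ->.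
by move/(eq_below c ca) ->; rewrite orbT.
Qed.

Lemma card_children (a : node) :
  #|[set d | parent d a]| = if 1 < #|val a| then 2 else 0.
Proof.
have [a_gt1 | a_le1] := ltnP 1 #|val a|; last first.
  apply/eqP; rewrite cards_eq0; apply/eqP/setP => d; rewrite !inE.
  apply/negP => /parent_proper/proper_card; have [x xd] := node_nonempty d.
  have : 0 < #|val d| by apply/card_gt0P; exists x.
  by move=> + lt_da; move: (leq_trans lt_da a_le1); rewrite ltnS leqn0 => /eqP ->.
have [B FB /andP [ltB FaB]] := hier_split hierF (valP a) a_gt1.
pose b : node := exist _ B FB; pose c : node := exist _ (val a :\: B) FaB.
have disj : [disjoint val b & val c].
  by rewrite /= disjoint_sym disjoints_subset setDE subsetIr.
have bc_a : val b :|: val c = val a.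
  by rewrite /= -{2}(setID (val a) B) (setIidPr (proper_sub ltB)).
have -> : [set d | parent d a] = [set b; c].
  by apply/setP => d; rewrite !inE (parent_partE _ bc_a disj).
rewrite cards2; have [x xb] := node_nonempty b.
suff -> : b != c by [].
by apply/eqP => bc; move: (disjointFr disj xb); rewrite -bc xb.
Qed.

Lemma card_parents (a : node) : #|[set p | parent a p]| <= 1.
Proof.
case: (set_0Vmem [set p | parent a p]) => [-> | [p]]; first by rewrite cards0.
rewrite inE => ap; rewrite -(cards1 p); apply/subset_leq_card/subsetP => q.
by rewrite !inE => /(parent_uniq ap) ->.
Qed.

Lemma hasse_tdeg (a : node) :
  tdeg hasse a = #|[set p | parent a p]| + #|[set d | parent d a]|.
Proof.
have /eqP <- : #|[set p | parent a p] :|: [set d | parent d a]| ==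
               #|[set p | parent a p]| + #|[set d | parent d a]|.
  rewrite (leq_card_setU _ _).2 -setI_eq0; apply/eqP/setP => b; rewrite !inE.
  apply/negP => /andP [/parent_proper ltab /parent_proper].
  by rewrite properE (proper_sub ltab) andbF.
by apply: eq_card => b; rewrite !inE.
Qed.

Lemma hasse_tdeg3 (a : node) : tdeg hasse a <= 3.
Proof. by rewrite hasse_tdeg card_children; have := card_parents a; case: ifP; lia. Qed.

Lemma hasse_leafP (a : node) : tdeg hasse a <= 1 <-> exists x, leaf x = a.
Proof.
rewrite hasse_tdeg card_children; split => [| [x <-]]; last first.
  by rewrite /= cards1 addn0 card_parents.
case: ifP => [_ | /negbT]; first lia.
rewrite -leqNgt => a_le1 _; have [x xa] := node_nonempty a.
by exists x; apply: val_inj => /=; apply/eqP; rewrite eqEcard sub1set xa cards1 a_le1.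
Qed.

Lemma connect_up (e : rel node) (a b : node) : val a \subset val b ->
  (forall x q, parent x q -> val a \subset val x -> val x \proper val b -> e x q) ->
  connect e a b.
Proof.
have [n] := ubnP #|~: val a|; elim: n a => // n IH a lt_an sab step.
case: (eqVneq (val a) (val b)) => [/val_inj -> // | nab].
have ltab : val a \proper val b by rewrite properEneq nab.
have [p ap] : exists p, parent a p.
  by apply: parent_exists; rewrite -properT (proper_sub_trans ltab (subsetT _)).
apply: connect_trans (connect1 (step a p ap (subxx _) ltab)) (IH p _ (parent_min ap ltab) _).
  by rewrite -ltnS; apply: leq_trans lt_an; rewrite ltnS proper_card // properC parent_proper.
move=> x q xq spx; apply: step xq _.
exact: subset_trans (proper_sub (parent_proper ap)) spx.
Qed.

Lemma hasse_sym : symmetric hasse.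
Proof. by move=> a b; rewrite /hasse orbC. Qed.

Lemma hasse_connect (a b : node) : connect hasse a b.
Proof.
have up x : connect hasse x root.
  by apply: (connect_up (b := root) (subsetT _)) => y q yq _ _; rewrite /hasse yq.
by apply: connect_trans (up a) _; rewrite (sym_connect_sym hasse_sym) up.
Qed.

Section CutEdge.
Variables c p : node.
Hypothesis cp : parent c p.
Local Notation D := (del_edge hasse c p).

Lemma del_parent_closed : closed D [pred a : node | val a \subset val c].
Proof.
have step a b : parent a b -> ~~ ((a == c) && (b == p)) ->
    (val a \subset val c) = (val b \subset val c).
  move=> ab nedge; apply/idP/idP => [sac | ]; last first.
    exact/subset_trans/proper_sub/parent_proper.
  case: (eqVneq a c) => [eac | nac]; last first.
    by apply: (parent_min ab); rewrite properEneq sac val_eqE nac.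
  by subst a; rewrite (parent_uniq ab cp) !eqxx in nedge.
move=> a b; rewrite !inE /del_edge /hasse negb_or => /andP [/orP [ab | ba] /andP [n1 n2]].
  exact: step.
by symmetry; apply: step; rewrite // andbC.
Qed.

Lemma del_parent_below (a : node) : connect D c a = (val a \subset val c).
Proof.
apply/idP/idP => [/(closed_connect del_parent_closed) | sac].
  by rewrite !inE subxx => <-.
rewrite (sym_connect_sym (del_edge_sym _ _ hasse_sym)).
apply: (connect_up sac) => x q xq _ ltxc; rewrite /del_edge /hasse xq /=.
have nxc : x != c by apply: contraTneq ltxc => ->; rewrite properxx.
have nxp : x != p by apply: contraTneq ltxc => ->; rewrite properE (negPf (parent_not_sub cp)).
by rewrite (negPf nxc) (negPf nxp).
Qed.

Lemma del_parent_above (a : node) : connect D p a = ~~ (val a \subset val c).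
Proof.
have npc := parent_not_sub cp.
apply/idP/idP => [/(closed_connect del_parent_closed) | nac].
  by rewrite !inE (negPf npc) => <-.
have to_root (b : node) : ~~ (val b \subset val c) -> connect D b root.
  move=> nbc; apply: (connect_up (b := root) (subsetT _)) => x q xq sbx _.
  have nxc : x != c by apply: contraNneq nbc => <-.
  have nqc : q != c.
    apply: contraNneq nbc => qc; rewrite qc in xq.
    exact: subset_trans sbx (proper_sub (parent_proper xq)).
  by rewrite /del_edge /hasse xq /= (negPf nxc) (negPf nqc) andbF.
apply: connect_trans (to_root p npc) _.
by rewrite (sym_connect_sym (del_edge_sym _ _ hasse_sym)) to_root.
Qed.

End CutEdge.

Lemma hasse_tree : is_tree hasse.
Proof.
split; first exact: hasse_sym.
split; first by move=> a; rewrite /hasse orbb /parent properxx.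
split; first exact: hasse_connect.
move=> u v /orP [uv | vu]; first by rewrite (del_parent_below uv) parent_not_sub.
rewrite (eq_connect (del_edgeC hasse u v)) (sym_connect_sym (del_edge_sym _ _ hasse_sym)).
by rewrite (del_parent_below vu) parent_not_sub.
Qed.

Lemma hasse_cut_rank (u v : node) : hasse u v ->
  cut_rank [set x | connect (del_edge hasse u v) u (leaf x)] <= K.
Proof.
case/orP => [uv | vu].
  have -> : [set x | connect (del_edge hasse u v) u (leaf x)] = val u.
    by apply/setP => x; rewrite inE (del_parent_below uv) /= sub1set.
  exact: (hier_cut_rank hierF (valP u)).
have -> : [set x | connect (del_edge hasse u v) u (leaf x)] = ~: val v.
  apply/setP => x.
  by rewrite inE (eq_connect (del_edgeC hasse u v)) (del_parent_above vu) /= sub1set inE.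
by rewrite cut_rankC; exact: (hier_cut_rank hierF (valP v)).
Qed.

Lemma hierarchy_rank_decomp : rank_decomp G K.
Proof.
exists node, hasse, leaf; split.
- exact: hasse_tree.
- exact: hasse_tdeg3.
- by move=> x y /(congr1 val) /set1_inj.
- exact: hasse_leafP.
- exact: hasse_cut_rank.
Qed.

End HasseTree.

Lemma fwin0 (G : sgraph) (H : rel (vert G)) v : ~ fwin 0 H v.
Proof. by case=> _ _ H' [p _] _; case: (p v). Qed.

Theorem rw_le_fw (G : sgraph) k : flipper_wins G k -> rw_le G (3 * k + 1).
Proof.
move=> win; have [V_le1 | V_gt1] := leqP #|vert G| 1; [by left | right].
have [v0 _] : exists v : vert G, v \in [set: vert G].
  by apply/set0Pn; rewrite -card_gt0 cardsT; lia.
have k_gt0 : 0 < k by case: k win => // /(_ v0) /fwin0.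
have [Fam hierF] : exists Fam, hierarchy [set: vert G] (3 * k + 1) Fam.
  apply: (hierarchy_exists k_gt0 (flipper_wins_balanced_separator win k_gt0)).
    by apply/set0Pn; exists v0.
  by rewrite cut_rankT.
exact: hierarchy_rank_decomp hierF.
Qed.

(** * Flips separating the parts of a partition *)

Lemma card_bigcup_leq (I T : finType) (P : {pred I}) (F : I -> {set T}) :
  #|\bigcup_(i in P) F i| <= \sum_(i in P) #|F i|.
Proof.
apply: (big_ind2 (fun (A : {set T}) n => #|A| <= n)) => //; first by rewrite cards0.
by move=> A m B n leAm leBn; apply: leq_trans (leq_card_setU A B) (leq_add leAm leBn).
Qed.

Lemma connect_key (T : finType) (U : eqType) (e : rel T) (f : T -> U) :
  (forall x y, e x y -> f x = f y) -> forall x y, connect e x y -> f x = f y.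
Proof.
move=> ef x y; have cl : closed e [pred z | f z == f x].
  by move=> a b /ef; rewrite !inE => ->.
by move/(closed_connect cl); rewrite !inE eqxx => /esym /eqP.
Qed.

Section PartitionFlips.
Variable G : sgraph.
Local Notation V := (vert G).
Local Notation E := (@adj G).

Lemma kflip_of_labels (T : finType) (lab : V -> T) (R : rel T) k (H : rel V) :
  symmetric R -> #|[set lab x | x : V]| <= k ->
  (forall x y, H x y = (x != y) && (E x y (+) R (lab x) (lab y))) -> is_kflip k H.
Proof.
move=> symR card_lab HE; set Lab := [set lab x | x : V].
have Lab_lab x : lab x \in Lab by apply: imset_f.
pose p x : 'I_k := widen_ord card_lab (enum_rank_in (Lab_lab x) (lab x)).
have p_lab x y : (p x == p y) = (lab x == lab y).
  apply/eqP/eqP => [/(congr1 val) /= /val_inj pxy | lxy].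
    by rewrite -(enum_rankK_in (Lab_lab x) (Lab_lab x)) pxy enum_rankK_in.
  apply: val_inj => /=; congr (val _).
  by apply: enum_val_inj; rewrite !enum_rankK_in // lxy.
pose F i j := [exists x, exists y, [&& p x == i, p y == j & R (lab x) (lab y)]].
exists p, F; split=> [i j | x y].
  apply/existsP/existsP => -[x /existsP [y /and3P [px py Rxy]]];
    by exists y; apply/existsP; exists x; rewrite px py symR.
rewrite HE; congr (_ && (_ (+) _)); apply/idP/existsP => [Rxy | [x' /existsP [y' /and3P []]]].
  by exists x; apply/existsP; exists y; rewrite !eqxx.
by rewrite !p_lab => /eqP -> /eqP ->.
Qed.

Lemma flipper_wins_ge_card k : #|V| <= k -> flipper_wins G k.
Proof.
move=> Vk v0; have flip0 : is_kflip k ([rel x y | false] : rel V).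
  apply: (kflip_of_labels (lab := id) (R := E)) => [|| x y]; first exact: adj_sym.
    exact: leq_trans (leq_imset_card _ _) Vk.
  by rewrite addbb andbF.
by apply: (fwin_intro flip0) => w _; left.
Qed.

(* Label each vertex by its block and its adjacency to the other blocks: the
   labels determine all edges between different blocks, and each block has
   at most [2 ^ r] adjacency patterns. *)
Lemma flip_partition (T : finType) (key : V -> T) m r :
  #|[set key x | x : V]| <= m ->
  (forall c, cut_rank [set x | key x == c] <= r) ->
  exists2 H : rel V, is_kflip (m * 2 ^ r) H &
    forall x y, H x y = (key x == key y) && E x y.
Proof.
move=> card_key cut_block; pose block c := [set x | key x == c].
pose lab x := (key x, adj_row (~: block (key x)) x).
pose R a b := (a.1 != b.1) && [exists x, exists y, [&& lab x == a, lab y == b & E x y]].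
have symR : symmetric R.
  move=> a b; rewrite /R eq_sym; congr (_ && _).
  by apply/existsP/existsP => -[x /existsP [y /and3P [/eqP <- /eqP <- Exy]]];
    exists y; apply/existsP; exists x; rewrite !eqxx adj_sym.
have R_lab x y : R (lab x) (lab y) = (key x != key y) && E x y.
  rewrite /R /=; case: eqVneq => //= nxy; apply/existsP/idP => [|Exy]; last first.
    by exists x; apply/existsP; exists y; rewrite !eqxx.
  case=> x' /existsP [y' /and3P [/eqP [kx rx] /eqP [ky ry] Ex'y']].
  rewrite kx in rx; rewrite ky in ry.
  have -> : E x y = E x' y by apply: (adj_row_eq (esym rx)); rewrite !inE eq_sym.
  suff -> : E x' y = E x' y' by [].
  by rewrite adj_sym [E x' y']adj_sym; apply: (adj_row_eq (esym ry)); rewrite !inE kx.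
exists (fun x y => (x != y) && (E x y (+) R (lab x) (lab y))); last first.
  move=> x y; rewrite R_lab; case: eqVneq => [-> | nxy]; first by rewrite eqxx adj_irr andbF.
  by case: eqVneq => _; rewrite ?addbb ?addbF ?andbF.
apply: kflip_of_labels symR _ (fun _ _ => erefl).
have sub_lab : [set lab x | x : V] \subset \bigcup_(c in [set key x | x : V])
    [set (c, v) | v in [set adj_row (~: block c) x | x in block c]].
  apply/subsetP => _ /imsetP [x _ ->]; apply/bigcupP; exists (key x); first exact: imset_f.
  by apply/imsetP; exists (adj_row (~: block (key x)) x); rewrite // imset_f // inE.
apply: leq_trans (subset_leq_card sub_lab) _; apply: leq_trans (card_bigcup_leq _ _) _.
apply: leq_trans (_ : \sum_(c in [set key x | x : V]) 2 ^ r <= _); last first.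
  by rewrite sum_nat_const leq_mul2r card_key orbT.
apply: leq_sum => c _; apply: leq_trans (leq_imset_card _ _) _.
apply: leq_trans (card_adj_rows _ _) _.
by rewrite leq_exp2l // cross_rankC -cut_rankE cut_block.
Qed.

End PartitionFlips.

(** * A flipper strategy along a rank decomposition *)

Section TreeSides.
Variables (N : finType) (t : rel N).
Hypothesis tree_t : is_tree t.

Let t_sym : symmetric t. Proof. by case: tree_t. Qed.
Let t_irr : irreflexive t. Proof. by case: tree_t => _ []. Qed.
Let t_connect a b : connect t a b. Proof. by case: tree_t => _ [_ []]. Qed.
Let t_bridge u v : t u v -> ~~ connect (del_edge t u v) u v.
Proof. by case: tree_t => _ [_ [_]]; apply. Qed.

Definition side (u v : N) := [set a | connect (del_edge t u v) u a].

Definition avoid (u : N) := [rel x y | [&& t x y, x != u & y != u]].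

Lemma connect_avoid_del u w a b : connect (avoid u) a b -> connect (del_edge t u w) a b.
Proof.
apply: connect_sub => x y /and3P [txy xu yu]; apply: connect1.
by rewrite /del_edge txy (negPf xu) (negPf yu) !andbF.
Qed.

Lemma path_avoid u x p : path t x p -> u \notin x :: p -> path (avoid u) x p.
Proof.
move=> tp up; apply: (sub_in_path (P := predC1 u)) tp.
  by move=> y z; rewrite !inE /= => yu zu ->; rewrite yu zu.
by apply/allP => y yp /=; apply: contraNneq up => <-.
Qed.

Lemma first_step u a : a != u -> exists2 c, t u c & connect (avoid u) c a.
Proof.
case/connectP: (t_connect u a) => p tp ->.
case: (shortenP tp) => [[| c p'] /= tp' uniq_p' _]; first by rewrite eqxx.
case/andP: tp' => tuc tp'; case/andP: uniq_p' => up' _ _.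
exists c => //; apply/connectP; exists p' => //; apply: path_avoid tp' up'.
Qed.

Lemma side_avoid c u a : t c u -> a \in side c u -> connect (avoid u) c a.
Proof.
move=> tcu; rewrite inE => /connectP [p dp ->].
case: (shortenP dp) => p' dp' uniq_p' _.
apply/connectP; exists p' => //; apply: path_avoid.
  by apply: sub_path dp' => x y /andP [].
by apply: contra (t_bridge tcu) => /(path_connect dp').
Qed.

Lemma side_self u v : u \in side u v.
Proof. by rewrite inE. Qed.

Lemma side_notin c u : t c u -> u \notin side c u.
Proof. by move/t_bridge; rewrite inE. Qed.

Lemma side_disj u v a : t u v -> a \in side u v -> a \notin side v u.
Proof.
move=> tuv; rewrite !inE (eq_connect (del_edgeC t v u)) => ua.
apply: contra (t_bridge tuv) => va; apply: connect_trans ua _.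
by rewrite (sym_connect_sym (del_edge_sym _ _ t_sym)).
Qed.

Lemma side_sub u v c : t u v -> t u c -> c != v -> side c u \subset side u v.
Proof.
move=> tuv tuc cv; apply/subsetP => a /(side_avoid _) ca; rewrite inE.
have uv : u != v by apply: contraTneq tuv => ->; rewrite t_irr.
have duc : del_edge t u v u c by rewrite /del_edge tuc eqxx (negPf cv) (negPf uv).
apply: connect_trans (connect1 duc) (connect_avoid_del _ (ca _)).
by rewrite t_sym.
Qed.

Lemma side_proper u v c : t u v -> t u c -> c != v -> side c u \proper side u v.
Proof.
move=> tuv tuc cv; apply/properP; split; first exact: side_sub.
by exists u; [apply: side_self | apply: side_notin; rewrite t_sym].
Qed.

Lemma side_cover u a : a != u -> exists2 c, t u c & a \in side c u.
Proof.
case/first_step => c tuc ca; exists c => //.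
by rewrite inE (eq_connect (del_edgeC t c u)) (connect_avoid_del _ ca).
Qed.

Lemma side_uniq u c c' a : t u c -> t u c' -> a \in side c u -> a \in side c' u -> c = c'.
Proof.
move=> tuc tuc' ac ac'; apply/eqP; apply: contraTT ac => cc'.
by apply: (side_disj tuc); apply: subsetP (side_sub tuc tuc' _) _ ac'; rewrite eq_sym.
Qed.

Lemma leaf_side u v : t u v -> tdeg t u <= 1 -> side u v = [set u].
Proof.
move=> tuv deg_u; apply/setP => a; rewrite inE.
case: eqVneq => [-> | au]; first exact: side_self.
apply/negP => av; have [c tuc ac] := side_cover au.
have cv : c != v by apply: contraTneq ac => ->; apply: side_disj.
have : #|[set v; c]| <= tdeg t u.
  by apply/subset_leq_card/subsetP => b; rewrite !inE => /orP [] /eqP ->.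
by rewrite cards2 eq_sym cv; lia.
Qed.

End TreeSides.

Section FlipperStrategy.
Variable G : sgraph.
Local Notation V := (vert G).
Local Notation E := (@adj G).
Variables (N : finType) (t : rel N) (L : V -> N) (r : nat).
Hypothesis tree_t : is_tree t.
Hypothesis deg_t : forall a, tdeg t a <= 3.
Hypothesis L_inj : injective L.
Hypothesis leafP : forall a, tdeg t a <= 1 <-> exists x, L x = a.
Hypothesis cut_t : forall u v, t u v ->
  cut_rank [set x | connect (del_edge t u v) u (L x)] <= r.

Let t_sym : symmetric t. Proof. by case: tree_t. Qed.

Lemma side_cut_rank u v : t u v -> cut_rank [set x | L x \in side t u v] <= r.
Proof.
move/cut_t; suff -> : [set x | L x \in side t u v] =
  [set x | connect (del_edge t u v) u (L x)] by [].
by apply/setP => x; rewrite !inE.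
Qed.

Lemma leaf_block_cut_rank u : cut_rank [set y | L y == u] <= r.
Proof.
have [v tuv | no_nbr] := pickP (t u); last first.
  suff -> : [set y | L y == u] = [set: V] by rewrite cut_rankT.
  apply/setP => y; rewrite !inE; apply: contraT => Lyu.
  by have [c /[!no_nbr]] := side_cover tree_t Lyu.
have [deg_u | deg_u] := leqP (tdeg t u) 1.
  suff -> : [set y | L y == u] = [set y | L y \in side t u v] by apply: side_cut_rank.
  by apply/setP => y; rewrite (leaf_side tree_t tuv deg_u) !inE.
suff -> : [set y | L y == u] = set0 by rewrite cut_rank0.
apply/setP => y; rewrite !inE; apply: contraTF deg_u => /eqP Lyu.
by rewrite -leqNgt; apply/leafP; exists y.
Qed.

(* Flipping at the node [u] separates the vertices by the branch at [u]
   containing their leaf; [None] is the vertex at [u] itself, if any. *)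
Definition node_key (u : N) (y : V) : option N :=
  [pick c | t u c && (L y \in side t c u)].

Lemma node_key_some u y c : (node_key u y == Some c) = t u c && (L y \in side t c u).
Proof.
rewrite /node_key; case: pickP => [c' /andP [tuc' yc'] | none]; last by rewrite none.
apply/eqP/andP => [[<-] // | [tuc yc]].
by rewrite (side_uniq tree_t tuc' tuc yc' yc).
Qed.

Lemma node_key_none u y : (node_key u y == None) = (L y == u).
Proof.
rewrite /node_key; case: pickP => [c /andP [tuc yc] | none] /=.
  apply/esym; apply: contraTF yc => /eqP ->.
  by apply: (side_notin tree_t); rewrite t_sym.
apply/esym; apply: contraT => Lyu; have [c tuc yc] := side_cover tree_t Lyu.
by have := none c; rewrite tuc yc.
Qed.

Lemma node_key_cut_rank u o : cut_rank [set y | node_key u y == o] <= r.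
Proof.
case: o => [c |]; last first.
  suff -> : [set y | node_key u y == None] = [set y | L y == u] by apply: leaf_block_cut_rank.
  by apply/setP => y; rewrite !inE node_key_none.
have [tuc | ntuc] := boolP (t u c).
  suff -> : [set y | node_key u y == Some c] = [set y | L y \in side t c u].
    by apply: side_cut_rank; rewrite t_sym.
  by apply/setP => y; rewrite !inE node_key_some tuc !inE.
suff -> : [set y | node_key u y == Some c] = set0 by rewrite cut_rank0.
by apply/setP => y; rewrite !inE node_key_some (negPf ntuc).
Qed.

Lemma card_node_keys u : #|[set node_key u y | y : V]| <= 4.
Proof.
apply: leq_trans (_ : #|None |: [set Some c | c in [set c | t u c]]| <= _).
  apply/subset_leq_card/subsetP => _ /imsetP [y _ ->].
  case ky: (node_key u y) => [c |]; last exact: setU11.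
  have /andP [tuc _] : t u c && (L y \in side t c u) by rewrite -node_key_some ky.
  by apply/setU1r/imsetP; exists c; rewrite ?inE.
rewrite cardsU1 -[4]/(1 + 3); apply: leq_add; first exact: leq_b1.
apply: leq_trans (leq_imset_card _ _) _; apply: leq_trans (deg_t u).
by rewrite /tdeg; apply/subset_leq_card/subsetP => c; rewrite !inE.
Qed.

Lemma node_flip u : exists2 H, is_kflip (4 * 2 ^ r) H & forall w, isolated H w \/
  exists2 c, t u c & forall w', connect H w w' -> L w' \in side t c u.
Proof.
have [H flipH HE] := flip_partition (card_node_keys u) (node_key_cut_rank u).
have key_conn w w' : connect H w w' -> node_key u w = node_key u w'.
  by apply: connect_key => x y; rewrite HE => /andP [/eqP].
exists H => // w; case kw: (node_key u w) => [c |]; [right | left].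
  have /andP [tuc _] : t u c && (L w \in side t c u) by rewrite -node_key_some kw.
  exists c => // w' /key_conn; rewrite kw => /esym /eqP.
  by rewrite node_key_some => /andP [].
move=> w'; rewrite HE; apply/negP => /andP [/eqP kww' Eww'].
have : L w == u by rewrite -node_key_none kw.
have : L w' == u by rewrite -node_key_none -kww' kw.
move=> /eqP <- /eqP /L_inj ww'.
by rewrite ww' adj_irr in Eww'.
Qed.

Lemma confined_win n u v : t u v -> #|side t u v| <= n ->
  forall (H : rel V) w, (forall w', connect H w w' -> L w' \in side t u v) ->
  fwin (4 * 2 ^ r) H w.
Proof.
elim: n u v => [|n IH] u v tuv le_n H w confined.
  by move: le_n; rewrite leqn0 cards_eq0 => /eqP s0; have := side_self t u v; rewrite s0 inE.
have [H' flipH' H'_conf] := node_flip u.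
apply: (fwin_intro flipH') => w' ww'; have uv_w' := confined w' ww'.
case: (H'_conf w') => [| [c tuc c_conf]]; [by left | right].
have cv : c != v.
  by apply: contraTneq (c_conf w' (connect0 _ _)) => ->; exact: (side_disj tree_t tuv uv_w').
apply: (IH c u) c_conf; first by rewrite t_sym.
by rewrite -ltnS; apply: leq_trans le_n; apply: proper_card (side_proper tree_t tuv tuc cv).
Qed.

Lemma rank_decomp_flipper_wins : flipper_wins G (4 * 2 ^ r).
Proof.
move=> v0; have [H flipH H_conf] := node_flip (L v0).
apply: (fwin_intro flipH) => w _; case: (H_conf w) => [| [c tuc c_conf]]; [by left | right].
by apply: (confined_win _ (leqnn _) c_conf); rewrite t_sym.
Qed.

End FlipperStrategy.

Theorem fw_le_rw (G : sgraph) r : rw_le G r -> flipper_wins G (4 * 2 ^ r).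
Proof.
case=> [V_le1 | [N [t [L [tree_t deg_t L_inj leafP cut_t]]]]].
  by apply: flipper_wins_ge_card; apply: leq_trans V_le1 _; rewrite muln_gt0 expn_gt0.
exact: rank_decomp_flipper_wins tree_t deg_t L_inj leafP cut_t.
Qed.

Lemma least_exists (P : nat -> Prop) n : P n -> exists m, P m /\ forall k, P k -> m <= k.
Proof.
elim/ltn_ind: n => n IH Pn.
case: (classic (exists2 k, k < n & P k)) => [[k ltkn Pk] | no_less]; first exact: IH Pk.
exists n; split=> // k Pk; rewrite leqNgt; apply/negP => ltkn.
by apply: no_less; exists k.
Qed.

Lemma rw_fw_bounds (G : sgraph) : exists r f, [/\ is_rw G r, is_fw G f &
  r <= 3 * f + 1 <= 12 * 2 ^ r + 12].
Proof.
have win := flipper_wins_ge_card (leqnn #|vert G|).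
have [r [rw_r min_r]] := least_exists (rw_le_fw win).
have [f [fw_f min_f]] := least_exists win.
exists r, f; split=> //.
have := min_r _ (rw_le_fw fw_f); have := min_f _ (fw_le_rw rw_r); lia.
Qed.

Lemma is_rw_uniq G r r' : is_rw G r -> is_rw G r' -> r = r'.
Proof. by case=> rw_r min_r [rw_r' min_r']; apply/eqP; rewrite eqn_leq min_r ?min_r'. Qed.

Lemma is_fw_uniq G f f' : is_fw G f -> is_fw G f' -> f = f'.
Proof. by case=> fw_f min_f [fw_f' min_f']; apply/eqP; rewrite eqn_leq min_f ?min_f'. Qed.

Theorem mainTheorem5 :
  (exists C : nat, forall G : sgraph,
     exists r f : nat, [/\ is_rw G r, is_fw G f &
       r <= 3 * f + 1 <= C * 2 ^ r + C]) /\
  (forall (I : Type) (F : I -> sgraph),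
     (exists b : nat, forall i r, is_rw (F i) r -> r <= b) <->
     (exists b : nat, forall i f, is_fw (F i) f -> f <= b)).
Proof.
split=> [| I F]; first by exists 12; apply: rw_fw_bounds.
split=> [[b rw_b] | [b fw_b]].
  exists (12 * 2 ^ b + 12) => i f fw_f.
  have [r [f' [rw_r fw_f' /andP [_ f_le]]]] := rw_fw_bounds (F i).
  rewrite (is_fw_uniq fw_f fw_f').
  have : 2 ^ r <= 2 ^ b by rewrite leq_exp2l // (rw_b i r rw_r).
  lia.
exists (3 * b + 1) => i r rw_r.
have [r' [f [rw_r' fw_f /andP [r_le _]]]] := rw_fw_bounds (F i).
by rewrite (is_rw_uniq rw_r rw_r'); have := fw_b i f fw_f; lia.
Qed.
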